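(* Let $(\mathcal{A},\mathbf{m})$ be a multiarrangement in $\mathbb{Q}^l$ with $\mathcal{A}=\{H_1,\dots,H_n\}$, $H_i=\alpha_i^{-1}(0)$, where the $\alpha_i\in S_\mathbb{Z}=\mathbb{Z}[x_1,\dots,x_l]$ are linear forms such that no prime number divides any $\alpha_i$. Let $p$ be a good prime for $(\mathcal{A},\mathbf{m})$ and assume that the map $\pi_p^l\colon\operatorname{Ker}(\varphi_\mathbb{Z})\to D(\mathcal{A}_p,\mathbf{m})$ is surjective. If $(\mathcal{A}_p,\mathbf{m})$ is free in $\mathbb{F}_p^l$ with exponents $(e_1,\dots,e_l)$, then $(\mathcal{A},\mathbf{m})$ is free in $\mathbb{Q}^l$ with exponents $(e_1,\dots,e_l)$.
   Context: For a field $\mathbb{K}$ and $R=\mathbb{K}[x_1,\dots,x_l]$, a multiarrangement $(\mathcal{B},\mathbf{m})$ in $\mathbb{K}^l$ consists of distinct linear hyperplanes $\beta_i^{-1}(0)$ with multiplicities $\mathbf{m}\ge0$; $D(\mathcal{B},\mathbf{m})=\{\delta=\sum_j f_j\partial_{x_j}: f_j\in R,\ \delta(\beta_i)\in\beta_i^{\mathbf{m}_i}R\ \forall i\}$, identified with a submodule of $R^l$ via $\delta\mapsto(f_1,\dots,f_l)^t$. It is free with exponents $(e_1,\dots,e_l)$ if $D(\mathcal{B},\mathbf{m})$ is a free $R$-module with a basis of homogeneous derivations of polynomial degrees $e_1,\dots,e_l$. Let $S_p=\mathbb{F}_p[x_1,\dots,x_l]$, $\pi_p\colon S_\mathbb{Z}\to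 S_p$ reduction mod $p$, and $\pi_p^k\colon S_\mathbb{Z}^k\to S_p^k$ its componentwise extension. A prime $p$ is good if $\pi_p(\alpha_i)\ne\pi_p(\alpha_j)$ for all $i\ne j$; then $(\mathcal{A}_p,\mathbf{m})$ is the multiarrangement in $\mathbb{F}_p^l$ with hyperplanes $\pi_p(\alpha_i)^{-1}(0)$ of multiplicity $\mathbf{m}(H_i)$. Let $M(\mathcal{A},\mathbf{m})\subseteq S_\mathbb{Z}^n$ be generated by $\alpha_i^{\mathbf{m}(H_i)}e_i$, $A(\mathcal{A})=(\partial\alpha_i/\partial x_j)_{i,j}$, and $\varphi_\mathbb{Z}\colon S_\mathbb{Z}^l\to S_\mathbb{Z}^n/M(\mathcal{A},\mathbf{m})$, $g\mapsto A(\mathcal{A})g$. For good $p$, $\pi_p^l$ maps $\operatorname{Ker}(\varphi_\mathbb{Z})$ into $D(\mathcal{A}_p,\mathbf{m})\subseteq S_p^l$. *)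

From HB Require Import structures.
From mathcomp Require Import all_boot all_order all_algebra.
From mathcomp Require Import mpoly.
Set Implicit Arguments. Unset Strict Implicit. Unset Printing Implicit Defensive.
Import Order.TTheory GRing.Theory Num.Theory.
Local Open Scope ring_scope.

(* Derivations of R[x_1..x_l] are identified with column vectors in R^l:
   delta = sum_j f_j d/dx_j  <->  (f_1,...,f_l)^t. *)

Definition deriv_app (R : comNzRingType) (l : nat)
  (delta : 'cV[{mpoly R[l]}]_l) (beta : {mpoly R[l]}) : {mpoly R[l]} :=
  \sum_(j < l) delta j 0 * mderiv j beta.

Definition in_D (R : comNzRingType) (l n : nat)
  (beta : 'I_n -> {mpoly R[l]}) (m : 'I_n -> nat)
  (delta : 'cV[{mpoly R[l]}]_l) : Prop :=
  forall i : 'I_n, exists h : {mpoly R[l]},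
    deriv_app delta (beta i) = beta i ^+ m i * h.

Definition free_with_exponents (R : comNzRingType) (l n : nat)
  (beta : 'I_n -> {mpoly R[l]}) (m : 'I_n -> nat) (e : 'I_l -> nat) : Prop :=
  exists theta : 'I_l -> 'cV[{mpoly R[l]}]_l,
    [/\ (forall k, in_D beta m (theta k)),
        (forall k (j : 'I_l), theta k j 0 \is (e k).-homog),
        (forall delta, in_D beta m delta ->
           exists g : 'I_l -> {mpoly R[l]}, delta = \sum_(k < l) g k *: theta k)
      & (forall g : 'I_l -> {mpoly R[l]},
           \sum_(k < l) g k *: theta k = 0 -> forall k, g k = 0)].

Definition coef_matrix (l n : nat) (alpha : 'I_n -> {mpoly int[l]})
  : 'M[{mpoly int[l]}]_(n, l) :=
  \matrix_(i < n, j < l) mderiv j (alpha i).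

(* g in Ker(phi_Z) : A(A) g lies in M(A,m) = (+)_i alpha_i^{m_i} S_Z e_i *)
Definition in_ker_phiZ (l n : nat) (alpha : 'I_n -> {mpoly int[l]})
  (m : 'I_n -> nat) (g : 'cV[{mpoly int[l]}]_l) : Prop :=
  forall i : 'I_n, exists h : {mpoly int[l]},
    (coef_matrix alpha *m g) i 0 = alpha i ^+ m i * h.

Definition pi_p (p l : nat) (q : {mpoly int[l]}) : {mpoly 'F_p[l]} :=
  map_mpoly (fun z : int => (z%:~R : 'F_p)) q.

Definition toQ (l : nat) (q : {mpoly int[l]}) : {mpoly rat[l]} :=
  map_mpoly (fun z : int => (z%:~R : rat)) q.

Definition prime_divides (l : nat) (q : nat) (alpha : {mpoly int[l]}) : Prop :=
  prime q /\ forall mon : 'X_{1..l}, (q%:Z %| alpha@_mon)%Z.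

(* Lift the homogeneous basis theta_1, ..., theta_l of D(A_p, m) to homogeneous
   G_1, ..., G_l in Ker(phi_Z), which is the Z-module D(A, m) over S_Z; it is
   p-saturated because no alpha_i vanishes mod p.  A relation sum_k C_k G_k = 0
   reduces mod p to one among the theta_k, so every C_k is divisible by p, and
   by induction by every power of p: the G_k are independent.  For spanning,
   every g in Ker(phi_Z) has p-adic approximations
   g = sum_k C_k G_k + p^R g_R for all R.  In finitely many monomial coordinates
   a rational functional vanishing on the Q-span of the X^a G_k takes at g an
   integer value (after clearing denominators) that is divisible by every p^R,
   hence it vanishes, and g lies in that span.  Clearing denominators transfers
   both facts to D(A, m) over Q. *)

From HB Require Import structures.
From mathcomp Require Import all_boot all_order all_algebra.
From mathcomp Require Import mpoly.
Import Order.TTheory GRing.Theory Num.Theory.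
Local Open Scope ring_scope.
Set Implicit Arguments. Unset Strict Implicit. Unset Printing Implicit Defensive.

Section CoefMap.
Variables (l : nat) (R S : nzRingType) (f : R -> S).
Hypothesis f0 : f 0 = 0.

(* Unlike [map_mpoly], [f] need not be additive. *)
Definition map_coef (q : {mpoly R[l]}) : {mpoly S[l]} :=
  \sum_(m : 'X_{1..l < msize q}) f q@_m *: 'X_[m].

Lemma mcoeff_map_coef q m : (map_coef q)@_m = f q@_m.
Proof.
have [lt_m|ge_m] := ltnP (mdeg m) (msize q).
  exact: (mcoeff_mpoly (fun m => f q@_m)).
rewrite (memN_msupp_eq0 (msize_mdeg_ge ge_m)) f0 raddf_sum big1 // => -[m' lt_m'] _ /=.
rewrite mcoeffZ mcoeffX; case: eqP => [eq_m'|_]; last by rewrite mulr0.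
by move: lt_m'; rewrite eq_m' ltnNge ge_m.
Qed.
End CoefMap.

Section Homogeneous.
Variables (l : nat) (R : comNzRingType).
Implicit Types (a q t : {mpoly R[l]}).
Local Notation ph := (pihomog mdeg).

Lemma mcoeff_pihomog d q m : (ph d q)@_m = if mdeg m == d then q@_m else 0.
Proof.
rewrite pihomogE raddf_sum /= big_mkcond /=.
under eq_bigr => m' _ do rewrite mcoeffZ mcoeffX.
have [q_m|q_m] := boolP (m \in msupp q).
  rewrite (bigD1_seq m) ?msupp_uniq //= eqxx mulr1 big1 ?addr0; first by case: ifP.
  by move=> m' /negbTE ne; case: ifP; rewrite ?ne ?mulr0.
rewrite (memN_msupp_eq0 q_m) if_same big1 // => m' _; case: ifP => // _.
by case: eqP => [->|_]; rewrite ?(memN_msupp_eq0 q_m) ?mul0r ?mulr0.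
Qed.

Lemma pihomogXM d e m t : t \is e.-homog ->
  ph d ('X_[m] * t) = if (mdeg m + e == d)%N then 'X_[m] * t else 0.
Proof.
move=> t_e; have Xt : 'X_[m] * t \is (mdeg m + e).-homog.
  by apply: dhomogM => //; rewrite dhomogX.
by case: eqP => [<-|/eqP ne]; [exact: pihomog_dE | exact: pihomog_ne0 Xt].
Qed.

Lemma pihomogM_homog d e a t : t \is e.-homog ->
  ph (d + e) (a * t) = ph d a * t.
Proof.
move=> t_e; rewrite {1}(mpolyE a) mulr_suml raddf_sum pihomogE mulr_suml /=.
rewrite [RHS]big_mkcond /=; apply: eq_bigr => m _.
rewrite -scalerAl linearZ /= (pihomogXM _ _ t_e) eqn_add2r.
by case: eqP; rewrite ?scaler0 ?mul0r // scalerAl.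
Qed.

Lemma pihomogM_homog_lt d e a t : t \is e.-homog -> (d < e)%N ->
  ph d (a * t) = 0.
Proof.
move=> t_e lt_de; rewrite {1}(mpolyE a) mulr_suml raddf_sum big1 // => m _ /=.
rewrite -scalerAl linearZ /= (pihomogXM _ _ t_e).
by rewrite gtn_eqF ?scaler0 // ltn_addl.
Qed.

Lemma mderiv_homog d i q : q \is d.+1.-homog -> mderiv i q \is d.-homog.
Proof.
move=> /dhomogP q_d; apply/dhomogP => m; rewrite mcoeff_msupp mcoeff_mderiv => nz.
have : (m + U_(i))%MM \in msupp q.
  by rewrite mcoeff_msupp; apply: contraNneq nz => ->; rewrite mul0rn.
by move/q_d => h; apply: succn_inj; rewrite -h -addn1 -(mdeg1 i); exact/esym/mdegD.
Qed.
End Homogeneous.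

Section MapMpoly.
Variables (l : nat) (R S : comNzRingType) (f : {additive R -> S}).

Lemma map_mpoly_pihomog d (q : {mpoly R[l]}) :
  map_mpoly f (pihomog mdeg d q) = pihomog mdeg d (map_mpoly f q).
Proof.
apply/mpolyP => m; rewrite mcoeff_map_mpoly !mcoeff_pihomog mcoeff_map_mpoly.
by case: ifP; rewrite ?raddf0.
Qed.

Lemma map_mpoly_homog d (q : {mpoly R[l]}) :
  q \is d.-homog -> map_mpoly f q \is d.-homog.
Proof. by rewrite !homog_piE -map_mpoly_pihomog => /eqP ->. Qed.

Lemma mderiv_map_mpoly j (q : {mpoly R[l]}) :
  mderiv j (map_mpoly f q) = map_mpoly f (mderiv j q).
Proof.
apply/mpolyP => m.
by rewrite mcoeff_map_mpoly !mcoeff_mderiv mcoeff_map_mpoly raddfMn.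
Qed.
End MapMpoly.

Section Derivations.
Variables (l n : nat) (R : comNzRingType).
Variables (beta : 'I_n -> {mpoly R[l]}) (m : 'I_n -> nat).
Implicit Types (u v : 'cV[{mpoly R[l]}]_l) (b c : {mpoly R[l]}).

Lemma deriv_appD u v b : deriv_app (u + v) b = deriv_app u b + deriv_app v b.
Proof. by rewrite /deriv_app -big_split; apply: eq_bigr => j _; rewrite mxE mulrDl. Qed.

Lemma deriv_appZ c u b : deriv_app (c *: u) b = c * deriv_app u b.
Proof. by rewrite /deriv_app mulr_sumr; apply: eq_bigr => j _; rewrite mxE mulrA. Qed.

Lemma in_D0 : in_D beta m 0.
Proof.
by move=> i; exists 0; rewrite mulr0 /deriv_app big1 // => j _; rewrite mxE mul0r.
Qed.

Lemma in_DD u v : in_D beta m u -> in_D beta m v -> in_D beta m (u + v).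
Proof.
move=> Du Dv i; have [[a ea] [b eb]] := (Du i, Dv i).
by exists (a + b); rewrite deriv_appD ea eb mulrDr.
Qed.

Lemma in_DZ c u : in_D beta m u -> in_D beta m (c *: u).
Proof.
by move=> Du i; have [a ea] := Du i; exists (c * a); rewrite deriv_appZ ea mulrCA.
Qed.

Lemma in_DB u v : in_D beta m u -> in_D beta m v -> in_D beta m (u - v).
Proof. by move=> Du Dv; rewrite -scaleN1r; apply/in_DD/in_DZ. Qed.

Lemma in_D_sum (I : Type) (r : seq I) (P : pred I) (F : I -> 'cV_l) :
  (forall i, P i -> in_D beta m (F i)) -> in_D beta m (\sum_(i <- r | P i) F i).
Proof. by move=> DF; elim/big_ind: _ => //; [exact: in_D0 | exact: in_DD]. Qed.

(* Each [mderiv j (beta i)] is a constant, so [deriv_app] commutes with taking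
   homogeneous components. *)
Lemma in_D_pihomog d u : (forall i, beta i \is 1.-homog) ->
  in_D beta m u -> in_D beta m (map_mx (pihomog mdeg d) u).
Proof.
move=> beta_lin Du i; have [h eh] := Du i.
have -> : deriv_app (map_mx (pihomog mdeg d) u) (beta i)
          = pihomog mdeg d (deriv_app u (beta i)).
  rewrite /deriv_app raddf_sum; apply: eq_bigr => j _.
  have dbeta : mderiv j (beta i) \is 0.-homog by apply: mderiv_homog.
  by have := pihomogM_homog d (u j 0) dbeta; rewrite addn0 mxE /= => ->.
have beta_m : beta i ^+ m i \is (m i).-homog.
  by have := dhomogMn (m i) (beta_lin i); rewrite mul1n.
rewrite eh mulrC; have [le_md|lt_dm] := leqP (m i) d.
  exists (pihomog mdeg (d - m i) h).
  by rewrite -{1}(subnK le_md) pihomogM_homog // mulrC.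
by exists 0; rewrite mulr0 (pihomogM_homog_lt _ beta_m).
Qed.
End Derivations.

Section DerivationsMap.
Variables (l n : nat) (R S : comNzRingType) (f : {rmorphism R -> S}).

Lemma deriv_app_map (u : 'cV[{mpoly R[l]}]_l) b :
  map_mpoly f (deriv_app u b) = deriv_app (map_mx (map_mpoly f) u) (map_mpoly f b).
Proof.
rewrite /deriv_app rmorph_sum; apply: eq_bigr => j _.
by rewrite mxE rmorphM mderiv_map_mpoly.
Qed.

Lemma in_D_map (beta : 'I_n -> {mpoly R[l]}) m u : in_D beta m u ->
  in_D (fun i => map_mpoly f (beta i)) m (map_mx (map_mpoly f) u).
Proof.
move=> Du i; have [h eh] := Du i; exists (map_mpoly f h).
by rewrite -deriv_app_map eh rmorphM rmorphXn.
Qed.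
End DerivationsMap.

Lemma in_ker_phiZE (l n : nat) (alpha : 'I_n -> {mpoly int[l]}) m g :
  in_ker_phiZ alpha m g <-> in_D alpha m g.
Proof.
have phiE i : (coef_matrix alpha *m g) i 0 = deriv_app g (alpha i).
  by rewrite mxE; apply: eq_bigr => j _; rewrite mxE mulrC.
by split=> Dg i; have [h eh] := Dg i; exists h; rewrite ?phiE // -phiE.
Qed.

Lemma dvdz_expn_eq0 (p : nat) (z : int) :
  (1 < p)%N -> (forall k, (p ^ k)%:Z %| z)%Z -> z = 0.
Proof.
move=> p_gt1 dvd_z; apply/eqP; rewrite -absz_eq0; apply: contraTT (dvd_z `|z|%N).
rewrite dvdzE absz_nat -lt0n => z_gt0; apply/negP => /(dvdn_leq z_gt0).
by rewrite leqNgt ltn_expl.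
Qed.

Lemma mcoeff_natrM (l k : nat) (R : nzRingType) (q : {mpoly R[l]}) mm :
  (k%:R * q)@_mm = k%:R * q@_mm.
Proof. by rewrite -mpolyC_nat mcoeffCM. Qed.

HB.instance Definition _ (p l : nat) :=
  GRing.RMorphism.copy (@pi_p p l) (map_mpoly (intr : {rmorphism int -> 'F_p})).
HB.instance Definition _ (l : nat) :=
  GRing.RMorphism.copy (@toQ l) (map_mpoly (intr : {rmorphism int -> rat})).

Section ReductionModP.
Variables (l p : nat).
Hypothesis p_pr : prime p.
Local Notation SZ := {mpoly int[l]}.
Local Notation pi := (@pi_p p l).

Lemma Fp_intr_eq0 (z : int) : ((z%:~R : 'F_p) == 0) = (p%:Z %| z)%Z.
Proof.
rewrite dvdzE /=.
have -> : ((z%:~R : 'F_p) == 0) = ((`|z|%N%:R : 'F_p) == 0).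
  by case: z => k; rewrite ?NegzE ?mulrNz ?oppr_eq0 -pmulrn.
by rewrite -(inj_eq val_inj) /= val_Fp_nat.
Qed.

Lemma mcoeff_pi_p (q : SZ) mm : (pi q)@_mm = (q@_mm)%:~R.
Proof. exact: mcoeff_map_mpoly. Qed.

Lemma pi_p_natr : pi p%:R = 0.
Proof. by rewrite rmorph_nat -mpolyC_nat pchar_Fp_0. Qed.

Lemma natr_mpoly_neq0 : (p%:R : SZ) != 0.
Proof. by rewrite -mpolyC_nat mpolyC_eq0 pnatr_eq0 -lt0n prime_gt0. Qed.

Lemma in_D_pi_p n (alpha : 'I_n -> SZ) m g :
  in_D alpha m g -> in_D (fun i => pi (alpha i)) m (map_mx pi g).
Proof. exact: (in_D_map (intr : {rmorphism int -> 'F_p})). Qed.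

Lemma pi_p_lift (a : {mpoly 'F_p[l]}) : exists q : SZ, pi q = a.
Proof.
exists (map_coef (fun x : 'F_p => (x : nat)%:Z) a); apply/mpolyP => mm.
by rewrite mcoeff_map_mpoly mcoeff_map_coef //; exact: natr_Zp.
Qed.

Lemma pi_p_eq0 (q : SZ) : pi q = 0 -> exists r, q = p%:R * r.
Proof.
move=> pi_q; exists (map_coef (fun z : int => (z %/ p%:Z)%Z) q); apply/mpolyP => mm.
rewrite mcoeff_natrM mcoeff_map_coef ?div0z // mulrC natz divzK //.
by rewrite -Fp_intr_eq0 -mcoeff_pi_p pi_q mcoeff0.
Qed.

Lemma pi_p_neq0 (a : SZ) : ~ prime_divides p a -> pi a != 0.
Proof.
move=> ndvd_a; apply/eqP => pi_a; apply: ndvd_a; split=> // mm.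
by rewrite -Fp_intr_eq0 -mcoeff_pi_p pi_a mcoeff0.
Qed.

Lemma pi_p_mx_eq0 (X : 'cV[SZ]_l) : map_mx pi X = 0 -> exists Y, X = p%:R *: Y.
Proof.
move=> pi_X; have /fin_all_exists [r er] : forall j, exists r, X j 0 = p%:R * r.
  move=> j; apply: pi_p_eq0.
  by have := congr1 (fun M : 'cV_l => M j 0) pi_X; rewrite !mxE.
by exists (\col_j r j); apply/matrixP => j k; rewrite (ord1 k) !mxE er.
Qed.

(* Since [pi a] is nonzero in the domain [F_p[x]], [p] divides [h]. *)
Lemma dvd_natrM_cancel (a y h : SZ) k : pi a != 0 ->
  p%:R * y = a ^+ k * h -> exists h', y = a ^+ k * h'.
Proof.
move=> pi_a e_y; have /pi_p_eq0 [h' eh'] : pi h = 0.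
  apply: (mulfI (expf_neq0 k pi_a)).
  by rewrite mulr0 -rmorphXn -rmorphM -e_y rmorphM /= pi_p_natr mul0r.
exists h'; apply: (mulfI natr_mpoly_neq0).
by rewrite e_y eh' mulrCA.
Qed.

Lemma in_D_natr_scale n (alpha : 'I_n -> SZ) m g :
  (forall i, pi (alpha i) != 0) -> in_D alpha m (p%:R *: g) -> in_D alpha m g.
Proof.
move=> pi_alpha Dg i; have [h eh] := Dg i.
by apply: (dvd_natrM_cancel (pi_alpha i)); rewrite -deriv_appZ; exact: eh.
Qed.
End ReductionModP.

Lemma rat_common_denom (I : finType) (x : I -> rat) :
  exists2 D : int, D != 0 & forall i, D%:~R * x i \is a Num.int.
Proof.
exists (\prod_i denq (x i)); first by apply/prodf_neq0 => i _; exact: denq_neq0.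
move=> i; rewrite (bigD1 i) //= intrM mulrC mulrA -numqE.
by apply: rpredM; apply: intr_int.
Qed.

(* A functional vanishing on [U] takes, after clearing denominators, an
   integer value at [v] that is divisible by every power of [p]. *)
Lemma submx_padic_closed (p r N : nat) (U : 'M[rat]_(r, N)) (v : 'rV[rat]_N) :
  (1 < p)%N ->
  (forall k, exists2 w : 'rV[rat]_N,
     (v - (p ^ k)%:R *: w <= U)%MS & forall i, w 0 i \is a Num.int) ->
  (v <= U)%MS.
Proof.
move=> p_gt1 approx; rewrite submxE; apply/eqP/rowP => j; rewrite [RHS]mxE.
have [D D0 intDf] := rat_common_denom (fun ij : 'I_N * 'I_N => cokermx U ij.1 ij.2).
have int_w (w : 'rV[rat]_N) : (forall i, w 0 i \is a Num.int) ->
    D%:~R * (w *m cokermx U) 0 j \is a Num.int.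
  move=> w_int; rewrite mxE mulr_sumr; apply: rpred_sum => i _.
  by rewrite mulrCA; apply: rpredM; [exact: w_int | exact: (intDf (i, j))].
have vf k (w : 'rV[rat]_N) : (v - (p ^ k)%:R *: w <= U)%MS ->
    (v *m cokermx U) 0 j = (p ^ k)%:R * (w *m cokermx U) 0 j.
  by rewrite submxE mulmxBl subr_eq0 -scalemxAl => /eqP ->; rewrite mxE.
have [w0 /(vf 0%N)] := approx 0%N; rewrite expn0 mul1r => vw0 /int_w.
rewrite -vw0 => /intrP [z ez].
suff z0 : z = 0.
  by move: ez; rewrite z0 mulr0z => /eqP; rewrite mulf_eq0 intr_eq0 (negbTE D0) => /eqP.
apply: (dvdz_expn_eq0 p_gt1) => k.
have [w /vf vwk /int_w /intrP [t et]] := approx k.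
have /intr_inj -> : z%:~R = ((p ^ k)%:Z * t)%:~R :> rat.
  by rewrite -ez vwk mulrCA et intrM.
exact/dvdz_mulr/dvdzz.
Qed.

Section RationalPolynomials.
Variable l : nat.

Lemma toQ_inj : injective (@toQ l).
Proof.
move=> a b /(congr1 (mcoeff _)) eab; apply/mpolyP => mm.
by have := eab mm; rewrite !mcoeff_map_mpoly; exact: intr_inj.
Qed.

Lemma map_toQ_inj k : injective (map_mx (@toQ l) : 'cV_k -> 'cV_k).
Proof.
move=> A B eAB; apply/matrixP => i j; apply: toQ_inj.
by have := congr1 (fun M : 'cV_k => M i j) eAB; rewrite !mxE.
Qed.

Lemma deriv_app_toQ (g : 'cV[{mpoly int[l]}]_l) b :
  toQ (deriv_app g b) = deriv_app (map_mx (@toQ l) g) (toQ b).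
Proof. exact: deriv_app_map. Qed.

Lemma in_D_toQ n (alpha : 'I_n -> {mpoly int[l]}) m g :
  in_D alpha m g -> in_D (fun i => toQ (alpha i)) m (map_mx (@toQ l) g).
Proof. exact: (in_D_map (intr : {rmorphism int -> rat})). Qed.

Lemma toQ_intP (q : {mpoly rat[l]}) :
  (forall mm, q@_mm \is a Num.int) -> exists Q, toQ Q = q.
Proof.
move=> q_int; exists (map_coef (@Num.floor _) q); apply/mpolyP => mm.
by rewrite mcoeff_map_mpoly mcoeff_map_coef ?floor0 //; exact: floorK.
Qed.

Lemma mpoly_common_denom (I : finType) (F : I -> {mpoly rat[l]}) :
  exists2 D : int, D != 0 & forall i, exists Q, toQ Q = D%:~R *: F i.
Proof.
pose B := (\max_i msize (F i))%N.
have [D D0 D_int] :=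
  rat_common_denom (fun x : I * 'X_{1..l < B} => (F x.1)@_(bmnm x.2)).
exists D => // i; apply: toQ_intP => mm; rewrite mcoeffZ.
have [lt_mB|ge_mB] := ltnP (mdeg mm) B; first exact: (D_int (i, BMultinom lt_mB)).
rewrite memN_msupp_eq0 ?mulr0 ?rpred0 // msize_mdeg_ge // (leq_trans _ ge_mB) //.
exact: (leq_bigmax i).
Qed.

Lemma in_D_toQ_denom n (alpha : 'I_n -> {mpoly int[l]}) m delta :
  in_D (fun i => toQ (alpha i)) m delta ->
  exists2 D : int, D != 0 &
    exists2 g, in_D alpha m g & map_mx (@toQ l) g = (D%:~R)%:MP *: delta.
Proof.
case/fin_all_exists => h eh.
pose F x := match x with inl j => delta j 0 | inr i => h i end.
have [D D0 /fin_all_exists [Q eQ]] := mpoly_common_denom F.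
pose g := \col_j Q (inl j).
have eg : map_mx (@toQ l) g = (D%:~R)%:MP *: delta.
  by apply/matrixP => j k; rewrite (ord1 k) !mxE eQ mul_mpolyC.
exists D => //; exists g => // i; exists (Q (inr i)); apply: toQ_inj.
rewrite deriv_app_toQ eg deriv_appZ eh rmorphM rmorphXn /= (eQ (inr i)).
by rewrite -mul_mpolyC mulrCA.
Qed.
End RationalPolynomials.

Lemma msize_homog (l : nat) (R : nzRingType) d (q : {mpoly R[l]}) :
  q \is d.-homog -> (msize q <= d.+1)%N.
Proof. by move=> /dhomogP q_d; apply/bigmax_leqP_seq => mm /q_d ->. Qed.

Section Coordinates.
Variables (K : fieldType) (l B : nat).
Local Notation SK := {mpoly K[l]}.
Local Notation Mon := 'X_{1..l < B}.
Local Notation N := #|{: 'I_l * Mon}|.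
Implicit Types v w : 'cV[SK]_l.

Definition mcoord (v : 'cV[SK]_l) : 'rV[K]_N :=
  \row_i (v (enum_val i).1 0)@_(bmnm (enum_val i).2).

Lemma mcoord_is_zmod_morphism : zmod_morphism mcoord.
Proof. by move=> u v; apply/rowP => i; rewrite !mxE mcoeffB. Qed.

HB.instance Definition _ :=
  GRing.isZmodMorphism.Build _ _ mcoord mcoord_is_zmod_morphism.

Lemma mcoordZ (c : K) v : mcoord (c%:MP *: v) = c *: mcoord v.
Proof. by apply/rowP => i; rewrite !mxE mcoeffCM. Qed.

Lemma mcoord_rank v j (a : Mon) : mcoord v 0 (enum_rank (j, a)) = (v j 0)@_a.
Proof. by rewrite mxE enum_rankK. Qed.

Lemma mcoord_inj v w : (forall j, (msize (v j 0%R) <= B)%N) ->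
  (forall j, (msize (w j 0%R) <= B)%N) -> mcoord v = mcoord w -> v = w.
Proof.
move=> v_B w_B vw; apply/matrixP => j k; rewrite (ord1 k); apply/mpolyP => mm.
have [lt_mB|ge_mB] := ltnP (mdeg mm) B.
  have := congr1 (fun r : 'rV_N => r 0 (enum_rank (j, BMultinom lt_mB))) vw.
  by rewrite /= !mcoord_rank.
by rewrite !memN_msupp_eq0 // msize_mdeg_ge //
  ?(leq_trans (v_B j)) ?(leq_trans (w_B j)).
Qed.

Variables (e : 'I_l -> nat) (Q : 'I_l -> 'cV[SK]_l).
Hypothesis Q_homog : forall k j, Q k j 0 \is (e k).-homog.

Definition span_mx : 'M[K]_N :=
  \matrix_(r < N) mcoord ('X_[bmnm (enum_val r).2] *: Q (enum_val r).1).

Lemma homogXQ (a : 'X_{1..l}) k j : 'X_[a] * Q k j 0 \is (mdeg a + e k).-homog.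
Proof. by apply: dhomogM; rewrite ?dhomogX. Qed.

Lemma mcoordXQ_high (a : 'X_{1..l}) k : (B <= mdeg a + e k)%N ->
  mcoord ('X_[a] *: Q k) = 0.
Proof.
move=> le_B; apply/rowP => i; rewrite [LHS]mxE [RHS]mxE mxE.
by rewrite (dhomog_nemf_coeff (homogXQ _ _ _)) // neq_ltn (leq_trans (bmdeg _)).
Qed.

Lemma mcoord_combination_sub (c : 'I_l -> SK) :
  (mcoord (\sum_k c k *: Q k) <= span_mx)%MS.
Proof.
rewrite raddf_sum; apply/summx_sub => k _.
rewrite {1}(mpolyE (c k)) scaler_suml raddf_sum; apply/summx_sub => a _.
rewrite /= -mul_mpolyC -scalerA (mcoordZ ((c k)@_a)); apply/scalemx_sub.
have [lt_aB|ge_aB] := ltnP (mdeg a) B.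
  by have := row_sub (enum_rank (k, BMultinom lt_aB)) span_mx; rewrite rowK enum_rankK.
by rewrite mcoordXQ_high ?sub0mx // (leq_trans ge_aB) ?leq_addr.
Qed.

Lemma sub_span_combination v : (forall j, (msize (v j 0%R) <= B)%N) ->
  (mcoord v <= span_mx)%MS -> exists c, v = \sum_k c k *: Q k.
Proof.
move=> v_B /submxP [lam e_v].
pose c k := \sum_(a : Mon | (mdeg a + e k < B)%N) lam 0 (enum_rank (k, a)) *: 'X_[a].
exists c; apply: mcoord_inj => // [j|].
  rewrite summxE; apply: (leq_trans (mmeasure_sum _ _ _ _)); apply/bigmax_leqP => k _.
  rewrite mxE mulr_suml; apply: (leq_trans (mmeasure_sum _ _ _ _)).
  apply/bigmax_leqP => a lt_B; rewrite -scalerAl (leq_trans (msizeZ_le _ _)) //.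
  exact: leq_trans (msize_homog (homogXQ _ _ _)) lt_B.
rewrite e_v mulmx_sum_row (reindex (@enum_rank _)) /=; last first.
  exact: onW_bij (enum_rank_bij _).
have -> : mcoord (\sum_k c k *: Q k) = \sum_k \sum_(a : Mon)
    lam 0 (enum_rank (k, a)) *: mcoord ('X_[bmnm a] *: Q k).
  rewrite raddf_sum; apply: eq_bigr => k _.
  rewrite /c scaler_suml raddf_sum big_mkcond; apply: eq_bigr => a _ /=.
  case: ltnP => [_|le_B]; last by rewrite mcoordXQ_high ?scaler0.
  by rewrite -mul_mpolyC -scalerA (mcoordZ (lam 0 _)).
by rewrite pair_bigA; apply: eq_bigr => -[k a] _; rewrite rowK enum_rankK.
Qed.
End Coordinates.

Lemma map_mx_combination (R S : comNzRingType) (f : {rmorphism R -> S}) r k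
    (c : 'I_k -> R) (v : 'I_k -> 'cV[R]_r) :
  map_mx f (\sum_i c i *: v i) = \sum_i f (c i) *: map_mx f (v i).
Proof.
apply/matrixP => a b; rewrite !mxE !summxE rmorph_sum; apply: eq_bigr => i _.
by rewrite !mxE rmorphM.
Qed.

Section LiftedBasis.
Variables (l n p : nat) (alpha : 'I_n -> {mpoly int[l]}) (m : 'I_n -> nat).
Variable e : 'I_l -> nat.
Hypothesis p_pr : prime p.
Hypothesis pi_alpha : forall i, pi_p p (alpha i) != 0.
Variable theta : 'I_l -> 'cV[{mpoly 'F_p[l]}]_l.
Hypothesis theta_span : forall delta, in_D (fun i => pi_p p (alpha i)) m delta ->
  exists a : 'I_l -> {mpoly 'F_p[l]}, delta = \sum_k a k *: theta k.
Hypothesis theta_free : forall a : 'I_l -> {mpoly 'F_p[l]},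
  \sum_k a k *: theta k = 0 -> forall k, a k = 0.
Variable G : 'I_l -> 'cV[{mpoly int[l]}]_l.
Hypothesis G_D : forall k, in_D alpha m (G k).
Hypothesis G_lift : forall k, map_mx (@pi_p p l) (G k) = theta k.
Hypothesis G_homog : forall k j, G k j 0 \is (e k).-homog.

Local Notation pi := (@pi_p p l).

Lemma pi_p_combination (C : 'I_l -> {mpoly int[l]}) :
  map_mx pi (\sum_k C k *: G k) = \sum_k pi (C k) *: theta k.
Proof. by rewrite map_mx_combination; apply: eq_bigr => k _; rewrite G_lift. Qed.

Lemma in_D_approx_step g : in_D alpha m g ->
  exists A, exists2 g', in_D alpha m g' & g = \sum_k A k *: G k + p%:R *: g'.
Proof.
move=> Dg; have [a ea] : exists a, map_mx pi g = \sum_k a k *: theta k.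
  by apply/theta_span/in_D_pi_p.
have /fin_all_exists [A eA] := fun k => pi_p_lift (a k).
have DX : in_D alpha m (g - \sum_k A k *: G k).
  by apply: in_DB => //; apply: in_D_sum => k _; apply: in_DZ.
have [g' eg'] : exists g', g - \sum_k A k *: G k = p%:R *: g'.
  apply: (pi_p_mx_eq0 p_pr); rewrite map_mxB pi_p_combination ea.
  by apply/eqP; rewrite subr_eq0; apply/eqP/eq_bigr => k _; rewrite eA.
exists A, g'; first by apply: (in_D_natr_scale p_pr pi_alpha); rewrite -eg'.
by rewrite -eg' addrC subrK.
Qed.

Lemma in_D_approx g : in_D alpha m g -> forall R,
  exists C, exists2 gR, in_D alpha m gR & g = \sum_k C k *: G k + p%:R ^+ R *: gR.
Proof.
move=> Dg; elim=> [|R [C [gR DgR ->]]].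
  exists (fun=> 0), g => //.
  by rewrite big1 ?add0r ?expr0 ?scale1r // => k _; rewrite scale0r.
have [A [g' Dg' ->]] := in_D_approx_step DgR.
exists (fun k => C k + p%:R ^+ R * A k), g' => //.
rewrite scalerDr scaler_sumr addrA exprSr -scalerA -big_split /=.
by congr (_ + _); apply: eq_bigr => k _; rewrite scalerDl scalerA.
Qed.

Lemma combination_eq0_dvd C : \sum_k C k *: G k = 0 ->
  forall R k, exists D, C k = p%:R ^+ R * D.
Proof.
move=> + R; elim: R C => [|R IH] C C0 k; first by exists (C k); rewrite expr0 mul1r.
have /fin_all_exists [C' eC'] : forall k, exists C', C k = p%:R * C'.
  move=> k'; apply: (pi_p_eq0 p_pr); apply: (theta_free (a := fun k => pi (C k))).
  by rewrite -pi_p_combination C0 map_mx0.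
have C'0 : \sum_k C' k *: G k = 0.
  move: C0; under eq_bigr do rewrite eC' -scalerA.
  rewrite -scaler_sumr => /eqP.
  by rewrite scalemx_eq0 (negbTE (natr_mpoly_neq0 _ p_pr)) => /eqP.
by have [D eD] := IH C' C'0 k; exists D; rewrite eC' eD mulrA -exprS.
Qed.

Lemma combination_eq0 C : \sum_k C k *: G k = 0 -> forall k, C k = 0.
Proof.
move=> C0 k; apply/mpolyP => mm; rewrite mcoeff0.
apply: (dvdz_expn_eq0 (prime_gt1 p_pr)) => R.
have [D ->] := combination_eq0_dvd C0 R k.
by rewrite -natrX mcoeff_natrM natz dvdz_mulr.
Qed.

Definition GQ k := map_mx (@toQ l) (G k).

Lemma GQ_homog k j : GQ k j 0 \is (e k).-homog.
Proof. by rewrite mxE; apply: map_mpoly_homog. Qed.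

Lemma GQ_span_toQ g : in_D alpha m g ->
  exists c, map_mx (@toQ l) g = \sum_k c k *: GQ k.
Proof.
move=> Dg; have [B g_B] : exists B, forall j, (msize (toQ (g j 0%R)) <= B)%N.
  by exists (\max_j msize (toQ (g j 0%R)))%N => j; exact: (leq_bigmax j).
apply: (sub_span_combination GQ_homog) => [j|]; first by rewrite mxE.
apply: (submx_padic_closed (prime_gt1 p_pr)) => R.
have [C [gR _ ->]] := in_D_approx Dg R.
exists (mcoord B (map_mx (@toQ l) gR)).
  rewrite map_mxD map_mxZ map_mx_combination rmorphXn rmorph_nat -natrX -mpolyC_nat.
  rewrite raddfD /= (mcoordZ B ((p ^ R)%:R : rat)) addrK.
  exact: mcoord_combination_sub GQ_homog _.
by move=> i; rewrite mxE mxE mcoeff_map_mpoly intr_int.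
Qed.

Lemma GQ_span delta : in_D (fun i => toQ (alpha i)) m delta ->
  exists c, delta = \sum_k c k *: GQ k.
Proof.
move=> Ddelta; have [D D0 [g Dg eg]] := in_D_toQ_denom Ddelta.
have [c ec] := GQ_span_toQ Dg.
exists (fun k => (D%:~R^-1)%:MP * c k).
have -> : delta = (D%:~R^-1)%:MP *: ((D%:~R)%:MP *: delta).
  by rewrite scalerA -mpolyCM mulVf ?intr_eq0 // scale1r.
by rewrite -eg ec scaler_sumr; apply: eq_bigr => k _; rewrite scalerA.
Qed.

Lemma GQ_free c : \sum_k c k *: GQ k = 0 -> forall k, c k = 0.
Proof.
move=> c0 k; have [D D0 /fin_all_exists [C eC]] := mpoly_common_denom c.
have C0 : \sum_k C k *: G k = 0.
  apply: map_toQ_inj; rewrite map_mx0 map_mx_combination.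
  under eq_bigr do rewrite /= eC -mul_mpolyC -scalerA.
  by rewrite -scaler_sumr c0 scaler0.
have /eqP := congr1 (@toQ l) (combination_eq0 C0 k).
by rewrite eC raddf0 scaler_eq0 intr_eq0 (negbTE D0) => /eqP.
Qed.
End LiftedBasis.

Lemma homogeneous_lift (l n p : nat) (alpha : 'I_n -> {mpoly int[l]}) m d
    (delta : 'cV[{mpoly 'F_p[l]}]_l) g :
  (forall i, alpha i \is 1.-homog) -> (forall j, delta j 0 \is d.-homog) ->
  in_D alpha m g -> map_mx (@pi_p p l) g = delta ->
  exists G, [/\ in_D alpha m G, map_mx (@pi_p p l) G = delta
              & forall j, G j 0 \is d.-homog].
Proof.
move=> alpha_lin g_d Dg pi_g; subst delta; exists (map_mx (pihomog mdeg d) g); split.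
- exact: in_D_pihomog.
- apply/matrixP => j k; rewrite [LHS]mxE [RHS]mxE [X in pi_p p X]mxE (ord1 k).
  by rewrite /pi_p map_mpoly_pihomog pihomog_dE //; have := g_d j; rewrite mxE.
- by move=> j; rewrite mxE pihomogP.
Qed.

Unset Implicit Arguments.
Theorem theorem4p2 (l n : nat) (alpha : 'I_n -> {mpoly int[l]})
  (m : 'I_n -> nat) (p : nat) (e : 'I_l -> nat) :
  (* alpha_i are linear forms *)
  (forall i, alpha i \is 1.-homog) ->
  (* no prime number divides any alpha_i *)
  (forall i, ~ exists q : nat, prime_divides q (alpha i)) ->
  (* the alpha_i define distinct hyperplanes of Q^l *)
  (forall i j : 'I_n, i != j -> forall c : rat, toQ (alpha i) != c *: toQ (alpha j)) ->
  (* p is a good prime *)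
  prime p ->
  (forall i j : 'I_n, i != j -> pi_p p (alpha i) != pi_p p (alpha j)) ->
  (* pi_p^l : Ker(phi_Z) -> D(A_p, m) is surjective *)
  (forall delta : 'cV[{mpoly 'F_p[l]}]_l,
     in_D (fun i => pi_p p (alpha i)) m delta ->
     exists g : 'cV[{mpoly int[l]}]_l,
       in_ker_phiZ alpha m g /\ map_mx (@pi_p p l) g = delta) ->
  (* (A_p, m) is free with exponents e *)
  free_with_exponents (fun i => pi_p p (alpha i)) m e ->
  (* then (A, m) is free with exponents e *)
  free_with_exponents (fun i => toQ (alpha i)) m e.
Proof.
move=> alpha_lin alpha_prim _ p_pr _ lift [theta [theta_D theta_e theta_span theta_free]].
have pi_alpha i : pi_p p (alpha i) != 0.
  by apply: (pi_p_neq0 p_pr) => p_dvd; apply: (alpha_prim i); exists p.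
have /fin_all_exists [G /all_and3 [G_D G_lift G_e]] : forall k, exists G,
    [/\ in_D alpha m G, map_mx (@pi_p p l) G = theta k
      & forall j, G j 0 \is (e k).-homog].
  move=> k; have [g [/in_ker_phiZE Dg pi_g]] := lift _ (theta_D k).
  exact: homogeneous_lift alpha_lin (theta_e k) Dg pi_g.
exists (GQ G); split=> [k|k j||].
- exact/in_D_toQ/G_D.
- exact: GQ_homog G_e k j.
- exact (GQ_span p_pr pi_alpha theta_span G_D G_lift G_e).
- exact (GQ_free p_pr theta_free G_lift).
Qed.
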